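(* Let $q$ be a prime power and let $n,k$ be integers with $3\le k\le\frac{n-2}{2}$, $n\le q$ and $k\le q-2$. Let $\alpha_1,\dots,\alpha_n\in\mathbb{F}_q$ be pairwise distinct and let $C_{k,k}$ be the linear code generated by the $k\times n$ matrix whose rows are $(\alpha_1^{e},\dots,\alpha_n^{e})$ for $e=0,1,\dots,k-2$ and $e=k$. If $C_{k,k}$ is an MDS code, then it is a non-GRS MDS code.
   Context: Convention: $0^0=1$. A linear code is MDS if its parameters $[n,k,d]$ satisfy $d=n-k+1$. For pairwise distinct $a_1,\dots,a_n\in\mathbb{F}_q$ and $w\in(\mathbb{F}_q^* )^n$, $GRS(n,k,\{a_i\},w)=\{(w_1f(a_1),\dots,w_nf(a_n)) : f\in\mathbb{F}_q[x],\ \deg f\le k-1\}$. Two codes are (monomially) equivalent if one is obtained from the other by permuting coordinates and scaling coordinates by nonzero scalars. A non-GRS MDS code is an MDS code not equivalent to any GRS code. *)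

From HB Require Import structures.
From mathcomp Require Import all_boot all_order all_algebra all_fingroup all_field.
Set Implicit Arguments. Unset Strict Implicit. Unset Printing Implicit Defensive.
Import GRing.Theory.
Local Open Scope ring_scope.

Definition code (F : fieldType) (n : nat) := 'rV[F]_n -> Prop.

Definition code_of (F : fieldType) (k n : nat) (G : 'M[F]_(k, n)) : code F n :=
  fun v => (v <= G)%MS.

Definition wt (F : fieldType) (n : nat) (v : 'rV[F]_n) : nat :=
  #|[set j : 'I_n | v 0 j != 0]|.

Definition has_min_dist (F : fieldType) (n : nat) (C : code F n) (d : nat) : Prop :=
  (exists2 c, C c & c != 0 /\ wt c = d) /\
  (forall c, C c -> c != 0 -> (d <= wt c)%N).

Definition is_MDS (F : fieldType) (k n : nat) (G : 'M[F]_(k, n)) : Prop :=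
  has_min_dist (code_of G) (n - \rank G + 1).

Definition GRS (F : fieldType) (n k : nat) (a w : 'I_n -> F) : code F n :=
  fun v => exists f : {poly F}, (size f <= k)%N /\ v = \row_i (w i * f.[a i]).

Definition mon_equiv (F : fieldType) (n : nat) (C1 C2 : code F n) : Prop :=
  exists (s : 'S_n) (u : 'I_n -> F), (forall i, u i != 0) /\
    forall v, C2 v <-> exists2 c, C1 c & v = \row_i (u i * c 0 (s i)).

Definition is_GRS_equiv (F : fieldType) (n : nat) (C : code F n) : Prop :=
  exists (k : nat) (a w : 'I_n -> F),
    injective a /\ (forall i, w i != 0) /\ mon_equiv (GRS k a w) C.

Definition Ckk_gen (F : fieldType) (n k : nat) (alpha : 'I_n -> F) : 'M[F]_(k, n) :=
  \matrix_(i < k, j < n) alpha j ^+ (if (i < k.-1)%N then (i : nat) else k).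

From HB Require Import structures.
From mathcomp Require Import all_boot all_order all_algebra all_fingroup all_field.
From mathcomp Require Import zify.
Set Implicit Arguments. Unset Strict Implicit. Unset Printing Implicit Defensive.
Import GRing.Theory.
Local Open Scope ring_scope.

(* Schur-square argument.  The coordinatewise (Schur) products of codewords of
   a GRS code of dimension m lie in a GRS code of dimension 2m - 1.  The Schur
   products of the rows of the generator of C_{k,k} are the rows alpha^e with
   e in {0,...,k-2,k} + {0,...,k-2,k} = {0,...,2k-2} u {2k}, i.e. the rows of
   C_{2k,2k}, which has full rank 2k since 2k < n.  A code monomially
   equivalent to a GRS code is itself GRS, and its dimension m is at most k, so
   2k <= 2m - 1 <= 2k - 1, a contradiction. *)

Lemma row_free_scaled_vandermonde (F : fieldType) (m n : nat) (e : 'I_m -> nat)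
    (b t : 'I_n -> F) :
  injective e -> (forall i, e i < n)%N -> injective b -> (forall j, t j != 0) ->
  row_free (\matrix_(i < m, j < n) (t j * b j ^+ e i)).
Proof.
move=> e_inj e_lt b_inj t_nz; apply/inj_row_free => v vA0.
pose p := \sum_(i < m) v 0 i *: 'X^(e i).
have p_root j : root p (b j).
  have /eqP := congr1 (fun r : 'rV_n => r 0 j) vA0.
  rewrite !mxE (eq_bigr (fun i => t j * (v 0 i * b j ^+ e i))) => [|i _]; last first.
    by rewrite mxE mulrCA.
  rewrite -mulr_sumr mulf_eq0 (negbTE (t_nz j)) /root horner_sum /= => /eqP sum0.
  apply/eqP; rewrite -[X in _ = X]sum0.
  by apply: eq_bigr => i _; rewrite hornerZ hornerXn.
have p0 : p = 0.
  apply: (@roots_geq_poly_eq0 _ _ [seq b j | j <- enum 'I_n]).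
  - by apply/allP => _ /mapP [j _ ->].
  - by rewrite map_inj_uniq ?enum_uniq.
  rewrite size_map size_enum_ord; apply: leq_trans (size_sum _ _ _) _.
  apply/bigmax_leqP => i _; apply: leq_trans (size_scale_leq _ _) _.
  by rewrite size_polyXn.
apply/rowP => i; have := congr1 (coefp (e i)) p0.
rewrite /= coef0 mxE coef_sum (bigD1 i) //= coefZ coefXn eqxx mulr1 big1 ?addr0 //.
by move=> l il; rewrite coefZ coefXn (inj_eq e_inj) eq_sym (negbTE il) mulr0.
Qed.

Definition GRS_gen (F : fieldType) (m n : nat) (b t : 'I_n -> F) : 'M[F]_(m, n) :=
  \matrix_(l < m, j < n) (t j * b j ^+ l).

Lemma row_free_GRS_gen (F : fieldType) (m n : nat) (b t : 'I_n -> F) :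
  (m <= n)%N -> injective b -> (forall j, t j != 0) -> row_free (GRS_gen m b t).
Proof.
move=> le_mn b_inj t_nz.
by apply: row_free_scaled_vandermonde => // [i j /val_inj | i]; last exact: leq_trans le_mn.
Qed.

Lemma GRS_sub_gen (F : fieldType) (m n : nat) (b t : 'I_n -> F) (v : 'rV[F]_n) :
  GRS m b t v -> (v <= GRS_gen m b t)%MS.
Proof.
case=> f [f_size ->].
have -> : \row_j (t j * f.[b j]) = (\row_(l < m) f`_l) *m GRS_gen m b t.
  apply/rowP => j; rewrite !mxE (horner_coef_wide _ f_size) mulr_sumr.
  by apply: eq_bigr => l _; rewrite !mxE mulrCA.
exact: submxMl.
Qed.

Lemma GRS_sub_rank (F : fieldType) (m n p : nat) (b t : 'I_n -> F) (A : 'M[F]_(p, n)) :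
  (m <= n)%N -> injective b -> (forall j, t j != 0) ->
  (forall v, GRS m b t v -> (v <= A)%MS) -> (m <= \rank A)%N.
Proof.
move=> le_mn b_inj t_nz GRS_sub.
have gen_sub : (GRS_gen m b t <= A)%MS.
  apply/row_subP => l; apply: GRS_sub; exists 'X^l; split; first by rewrite size_polyXn.
  by apply/rowP => j; rewrite !mxE hornerXn.
by rewrite -(eqnP (row_free_GRS_gen le_mn b_inj t_nz)) mxrankS.
Qed.

Lemma GRS_equiv_is_GRS (F : fieldType) (n : nat) (C : code F n) :
  is_GRS_equiv C -> exists m (b t : 'I_n -> F),
    [/\ injective b, forall j, t j != 0 & forall v, C v <-> GRS m b t v].
Proof.
case=> m [a [w [a_inj [w_nz [s [u [u_nz equiv]]]]]]].
exists m, (a \o s), (fun j => u j * w (s j)); split.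
- by move=> x y /a_inj /perm_inj.
- by move=> j; rewrite mulf_neq0.
move=> v; rewrite equiv; split.
  by case=> _ [f [f_size ->]] ->; exists f; split=> //; apply/rowP => j; rewrite !mxE mulrA.
case=> f [f_size ->]; exists (\row_i (w i * f.[a i])); first by exists f.
by apply/rowP => j; rewrite !mxE mulrA.
Qed.

Definition schur_prod (F : fieldType) (n : nat) (u v : 'rV[F]_n) : 'rV[F]_n :=
  \row_j (u 0 j * v 0 j).

Lemma GRS_schur_prod (F : fieldType) (m1 m2 n : nat) (b t : 'I_n -> F) (u v : 'rV[F]_n) :
  GRS m1 b t u -> GRS m2 b t v -> GRS (m1 + m2).-1 b (fun j => t j ^+ 2) (schur_prod u v).
Proof.
case=> [f [f_size ->]] [g [g_size ->]]; exists (f * g); split.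
  by apply: leq_trans (size_polyMleq f g) _; lia.
by apply/rowP => j; rewrite !mxE hornerM mulrACA expr2.
Qed.

Definition ckk_exp (k i : nat) : nat := if (i < k.-1)%N then i else k.

Lemma row_free_Ckk_gen (F : fieldType) (n k : nat) (alpha : 'I_n -> F) :
  (k < n)%N -> injective alpha -> row_free (Ckk_gen k alpha).
Proof.
move=> lt_kn alpha_inj.
have -> : Ckk_gen k alpha = \matrix_(i, j) (1 * alpha j ^+ ckk_exp k i).
  by apply/matrixP => i j; rewrite !mxE mul1r.
apply: row_free_scaled_vandermonde => // [i1 i2 | i | _]; rewrite /ckk_exp.
- by move=> eq_e; apply/ord_inj; move: eq_e (ltn_ord i1) (ltn_ord i2); (repeat case: ifP); lia.
- by case: ifP; lia.
- exact: oner_neq0.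
Qed.

Lemma ckk_exp_double (k i : nat) : (3 <= k)%N -> (i < k.*2)%N ->
  exists i1 i2, [/\ (i1 < k)%N, (i2 < k)%N & (ckk_exp k i1 + ckk_exp k i2)%N = ckk_exp k.*2 i].
Proof.
rewrite /ckk_exp => k3 lt_i_2k.
have [lt_i|] := ltnP i k.*2.-1; last first.
  by exists k.-1, k.-1; split; [lia|lia|]; rewrite ltnn; lia.
have [le_i|lt_i'] := leqP i (k - 2).
  by exists i, 0%N; split; [lia|lia|]; (repeat case: ifP); lia.
have [le_i'|gt_i] := leqP i (k.*2 - 4).
  by exists (k - 2)%N, (i - (k - 2))%N; split; [lia|lia|]; (repeat case: ifP); lia.
by exists (i - k)%N, k.-1; split; [lia|lia|]; (repeat case: ifP); lia.
Qed.

Lemma row_Ckk_gen_double (F : fieldType) (n k : nat) (alpha : 'I_n -> F) :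
  (3 <= k)%N -> forall i : 'I_k.*2, exists i1 i2 : 'I_k,
    row i (Ckk_gen k.*2 alpha) = schur_prod (row i1 (Ckk_gen k alpha)) (row i2 (Ckk_gen k alpha)).
Proof.
move=> k3 i; have [i1 [i2 [lt_i1 lt_i2 e_sum]]] := ckk_exp_double k3 (ltn_ord i).
exists (Ordinal lt_i1), (Ordinal lt_i2).
by apply/rowP => j; rewrite !mxE -exprD; congr (_ ^+ _); exact: esym e_sum.
Qed.

Theorem proposition4p3 (F : finFieldType) (n k : nat) (alpha : 'I_n -> F) :
  (3 <= k)%N -> (k.*2 <= n - 2)%N -> (n <= #|F|)%N -> (k <= #|F| - 2)%N ->
  injective alpha ->
  is_MDS (Ckk_gen k alpha) ->
  is_MDS (Ckk_gen k alpha) /\ ~ is_GRS_equiv (code_of (Ckk_gen k alpha)).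
Proof.
move=> k3 le_2k_n _ _ alpha_inj MDS; split=> // /GRS_equiv_is_GRS [m [b [t [b_inj t_nz CE]]]].
set G := Ckk_gen k alpha in CE.
have le_mk : (m <= k)%N.
  rewrite leqNgt; apply/negP => lt_km.
  have GRS_sub v : GRS k.+1 b t v -> (v <= G)%MS.
    by case=> f [f_size ->]; apply/CE; exists f; split=> //; apply: leq_trans lt_km.
  have le_k1n : (k.+1 <= n)%N by lia.
  have := GRS_sub_rank le_k1n b_inj t_nz GRS_sub.
  by have := rank_leq_row G; lia.
have square_sub : (Ckk_gen k.*2 alpha <= GRS_gen (m + m).-1 b (fun j => t j ^+ 2))%MS.
  apply/row_subP => i; have [i1 [i2 ->]] := row_Ckk_gen_double alpha k3 i.
  by apply/GRS_sub_gen/GRS_schur_prod; apply/CE; apply: row_sub.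
have := mxrankS square_sub; rewrite (eqnP (row_free_Ckk_gen _ alpha_inj)); last by lia.
by have := rank_leq_row (GRS_gen (m + m).-1 b (fun j => t j ^+ 2)); lia.
Qed.
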